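(* Let $(X,G)$ be topologically transitive and $X_0$ a dense $G$-invariant subset of $X_t$. Then $Q_0\subseteq S^{eq}_0$, and consequently $S^\ast_0\subseteq S^{eq}_0$.
   Context: $G$ is a group acting by homeomorphisms $x\mapsto gx$ on a compact metrizable space $X$, topologically transitive; $X_t:=\{x\in X:\overline{Gx}=X\}$; $X_0$ carries the subspace topology and $X_0^2$ the product topology. $G$ acts diagonally on $X^2$. $\Delta_0:=\{(x,x):x\in X_0\}$. $\mathcal U_0$ is the family of sets $U\cap X_0^2$ with $U\subseteq X^2$ open, $G$-invariant, $\Delta_0\subseteq U$; $Q_0:=\bigcap_{U_0\in\mathcal U_0}\overline{U_0}\cap X_0^2$. For a continuous $G$-equivariant map $\pi:X_0\to Y$ into a compact metrizable system $(Y,G)$ that is equicontinuous and minimal (equivalently, a compact metrizable group on which $G$ acts minimally by translations), let $S^\pi_0:=\{(x,x')\in X_0^2:\pi(x)=\pi(x')\}$; $S^{eq}_0:=\bigcap_\pi S^\pi_0$, the intersection over all such $Y$ and $\pi$. $S^\ast_0$ is the smallest closed (in $X_0^2$), $G$-invariant equivalence relation on $X_0$ containing $Q_0$. *)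

From Stdlib Require Import Reals List.
Open Scope R_scope.
Set Implicit Arguments.

Definition is_group (G : Type) (mul : G -> G -> G) (one : G) (inv : G -> G) : Prop :=
  (forall a b c, mul a (mul b c) = mul (mul a b) c) /\
  (forall a, mul one a = a) /\ (forall a, mul a one = a) /\
  (forall a, mul (inv a) a = one) /\ (forall a, mul a (inv a) = one).

Definition is_metric (X : Type) (d : X -> X -> R) : Prop :=
  (forall x y, 0 <= d x y) /\ (forall x y, d x y = 0 <-> x = y) /\
  (forall x y, d x y = d y x) /\ (forall x y z, d x z <= d x y + d y z).

Definition is_open (X : Type) (d : X -> X -> R) (U : X -> Prop) : Prop :=
  forall x, U x -> exists r, 0 < r /\ forall y, d x y < r -> U y.

Definition is_compact (X : Type) (d : X -> X -> R) : Prop :=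
  forall (I : Type) (U : I -> X -> Prop),
    (forall i, is_open d (U i)) -> (forall x, exists i, U i x) ->
    exists l : list I, forall x, exists i, In i l /\ U i x.

Definition dense (X : Type) (d : X -> X -> R) (A : X -> Prop) : Prop :=
  forall x eps, 0 < eps -> exists y, A y /\ d x y < eps.

Definition continuous (X Y : Type) (dX : X -> X -> R) (dY : Y -> Y -> R) (f : X -> Y) : Prop :=
  forall x eps, 0 < eps -> exists delta, 0 < delta /\
    forall y, dX x y < delta -> dY (f x) (f y) < eps.

Definition continuous_on (X Y : Type) (dX : X -> X -> R) (dY : Y -> Y -> R)
  (A : X -> Prop) (f : X -> Y) : Prop :=
  forall x, A x -> forall eps, 0 < eps -> exists delta, 0 < delta /\
    forall y, A y -> dX x y < delta -> dY (f x) (f y) < eps.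

(* action of G by homeomorphisms (inverse of act g is act (inv g)) *)
Definition is_action (G X : Type) (mul : G -> G -> G) (one : G)
  (d : X -> X -> R) (act : G -> X -> X) : Prop :=
  (forall x, act one x = x) /\
  (forall g h x, act (mul g h) x = act g (act h x)) /\
  (forall g, continuous d d (act g)).

Definition orbit (G X : Type) (act : G -> X -> X) (x : X) : X -> Prop :=
  fun y => exists g, y = act g x.

Definition top_transitive (G X : Type) (d : X -> X -> R) (act : G -> X -> X) : Prop :=
  forall U V : X -> Prop, is_open d U -> is_open d V ->
    (exists x, U x) -> (exists y, V y) ->
    exists g x, U x /\ V (act g x).

Definition Xt (G X : Type) (d : X -> X -> R) (act : G -> X -> X) : X -> Prop :=
  fun x => dense d (orbit act x).

Definition invariant (G X : Type) (act : G -> X -> X) (A : X -> Prop) : Prop :=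
  forall g x, A x -> A (act g x).

(* product (max) metric on X^2, inducing the product topology; diagonal action *)
Definition d2 (X : Type) (d : X -> X -> R) (p q : X * X) : R :=
  Rmax (d (fst p) (fst q)) (d (snd p) (snd q)).

Definition act2 (G X : Type) (act : G -> X -> X) (g : G) (p : X * X) : X * X :=
  (act g (fst p), act g (snd p)).

Definition closure (X : Type) (d : X -> X -> R) (A : X -> Prop) : X -> Prop :=
  fun x => forall eps, 0 < eps -> exists y, A y /\ d x y < eps.

Definition in_sq (X : Type) (X0 : X -> Prop) (p : X * X) : Prop :=
  X0 (fst p) /\ X0 (snd p).

Definition Q0 (G X : Type) (d : X -> X -> R) (act : G -> X -> X) (X0 : X -> Prop)
  (p : X * X) : Prop :=
  in_sq X0 p /\
  forall U : X * X -> Prop,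
    is_open (d2 d) U -> invariant (act2 act) U -> (forall x, X0 x -> U (x, x)) ->
    closure (d2 d) (fun q => U q /\ in_sq X0 q) p.

Definition equicontinuous (G Y : Type) (dY : Y -> Y -> R) (actY : G -> Y -> Y) : Prop :=
  forall eps, 0 < eps -> exists delta, 0 < delta /\
    forall g y y', dY y y' < delta -> dY (actY g y) (actY g y') < eps.

Definition minimal (G Y : Type) (dY : Y -> Y -> R) (actY : G -> Y -> Y) : Prop :=
  forall y, dense dY (orbit actY y).

(* S^eq_0 : intersection over all equicontinuous minimal compact metric factors
   pi : X_0 -> Y (pi given as a function on X; only its values on X_0 matter) *)
Definition Seq (G X : Type) (mul : G -> G -> G) (one : G) (d : X -> X -> R)
  (act : G -> X -> X) (X0 : X -> Prop) (p : X * X) : Prop :=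
  in_sq X0 p /\
  forall (Y : Type) (dY : Y -> Y -> R) (actY : G -> Y -> Y),
    is_metric dY -> is_compact dY -> is_action mul one dY actY ->
    equicontinuous dY actY -> minimal dY actY ->
    forall pi : X -> Y,
      continuous_on d dY X0 pi ->
      (forall g x, X0 x -> pi (act g x) = actY g (pi x)) ->
      pi (fst p) = pi (snd p).

Definition closed_inv_equiv (G X : Type) (d : X -> X -> R) (act : G -> X -> X)
  (X0 : X -> Prop) (S : X * X -> Prop) : Prop :=
  (forall p, S p -> in_sq X0 p) /\
  (forall p, in_sq X0 p -> closure (d2 d) S p -> S p) /\
  invariant (act2 act) S /\
  (forall x, X0 x -> S (x, x)) /\
  (forall x y, S (x, y) -> S (y, x)) /\
  (forall x y z, S (x, y) -> S (y, z) -> S (x, z)).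

Definition Sstar (G X : Type) (d : X -> X -> R) (act : G -> X -> X)
  (X0 : X -> Prop) (p : X * X) : Prop :=
  forall S : X * X -> Prop,
    closed_inv_equiv d act X0 S -> (forall q, Q0 d act X0 q -> S q) -> S p.

(* For an equicontinuous minimal factor pi and eps > 0, the pairs lying near the diagonal,
   at a scale on which pi oscillates by less than delta, form a neighbourhood of the diagonal
   of X_0; its G-saturation U is open and invariant, and equicontinuity (delta chosen for eps)
   keeps pi-distances below eps on all of U /\ X_0^2.  A point of Q_0 lies in the closure of
   U /\ X_0^2, so by continuity its two coordinates have pi-distance at most eps; hence the same
   image under pi.  Finally S^eq_0 is itself a closed invariant equivalence relation on X_0,
   so it contains S^*_0. *)
From Pilot Require Import Defs.
From Stdlib Require Import Reals List Lra.
Open Scope R_scope.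

Lemma metric_eq_of_lt {Y : Type} {dY : Y -> Y -> R} {a b : Y} :
  is_metric dY -> (forall eps, 0 < eps -> dY a b < eps) -> a = b.
Proof.
  intros [Hpos [Hzero _]] Hsmall.
  apply Hzero.
  destruct (Rle_lt_or_eq_dec 0 (dY a b) (Hpos a b)) as [Hlt | Heq]; [| now symmetry].
  specialize (Hsmall _ Hlt); lra.
Qed.

Section ProductMetric.

Context {X : Type} {d : X -> X -> R}.

Lemma d2_lt_fst {p q : X * X} {r : R} : Defs.d2 d p q < r -> d (fst p) (fst q) < r.
Proof. intros H; eapply Rle_lt_trans; [apply Rmax_l | exact H]. Qed.

Lemma d2_lt_snd {p q : X * X} {r : R} : Defs.d2 d p q < r -> d (snd p) (snd q) < r.
Proof. intros H; eapply Rle_lt_trans; [apply Rmax_r | exact H]. Qed.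

Lemma d2_lt (p q : X * X) (r : R) :
  d (fst p) (fst q) < r -> d (snd p) (snd q) < r -> Defs.d2 d p q < r.
Proof. apply Rmax_lub_lt. Qed.

Lemma d2_lt_min {p q : X * X} {r1 r2 : R} :
  Defs.d2 d p q < Rmin r1 r2 -> d (fst p) (fst q) < r1 /\ d (snd p) (snd q) < r2.
Proof.
  intros H; split.
  - eapply Rlt_le_trans; [apply (d2_lt_fst H) | apply Rmin_l].
  - eapply Rlt_le_trans; [apply (d2_lt_snd H) | apply Rmin_r].
Qed.

Lemma continuous_act2 {G : Type} {act : G -> X -> X} {g : G} :
  continuous d d (act g) -> continuous (Defs.d2 d) (Defs.d2 d) (act2 act g).
Proof.
  intros Hc p eps Heps.
  destruct (Hc (fst p) eps Heps) as [e1 [He1 Hb1]].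
  destruct (Hc (snd p) eps Heps) as [e2 [He2 Hb2]].
  exists (Rmin e1 e2); split; [now apply Rmin_pos |].
  intros q Hq; destruct (d2_lt_min Hq).
  apply d2_lt; [apply Hb1 | apply Hb2]; assumption.
Qed.

Lemma act2_action {G : Type} {mul : G -> G -> G} {one : G} {act : G -> X -> X} :
  is_action mul one d act -> is_action mul one (Defs.d2 d) (act2 act).
Proof.
  intros [act_one [act_mul act_cont]]; unfold act2; repeat split.
  - intros [x y]; simpl; now rewrite !act_one.
  - intros g h [x y]; simpl; now rewrite !act_mul.
  - intros g; apply continuous_act2, act_cont.
Qed.

End ProductMetric.

Section Saturation.

Context {G Z : Type} {mul : G -> G -> G} {one : G} {inv : G -> G} {dZ : Z -> Z -> R}.
Variable act : G -> Z -> Z.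

Definition saturation (V : Z -> Prop) : Z -> Prop := fun z => exists g, V (act g z).

Lemma saturation_open (V : Z -> Prop) :
  (forall g, continuous dZ dZ (act g)) -> is_open dZ V -> is_open dZ (saturation V).
Proof.
  intros Hc Vo z [g Hz].
  destruct (Vo _ Hz) as [s [Hs Hball]].
  destruct (Hc g z s Hs) as [e [He Hb]].
  exists e; split; [exact He |].
  intros y Hy; exists g; apply Hball, Hb, Hy.
Qed.

Lemma saturation_invariant (V : Z -> Prop) :
  is_group mul one inv -> is_action mul one dZ act -> invariant act (saturation V).
Proof.
  intros [_ [_ [_ [inv_mul _]]]] [act_one [act_mul _]] h z [g Hz].
  exists (mul g (inv h)).
  rewrite act_mul, <- (act_mul (inv h) h), inv_mul, act_one; exact Hz.
Qed.

End Saturation.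

Section Factor.

Context {X Y : Type} {d : X -> X -> R} {dY : Y -> Y -> R} {X0 : X -> Prop} {pi : X -> Y}.
Hypotheses (d_metric : is_metric d) (dY_metric : is_metric dY).
Hypothesis pi_cont : continuous_on d dY X0 pi.

(* pi is only continuous on X0, so the neighbourhood of the diagonal is built from balls
   around points of X0 on which pi oscillates by less than delta/2. *)
Definition controlled_pairs (delta : R) (q : X * X) : Prop :=
  exists z r, X0 z /\ 0 < r /\
    (forall y, X0 y -> d z y < r -> dY (pi z) (pi y) < delta / 2) /\
    d z (fst q) < r /\ d z (snd q) < r.

Lemma controlled_pairs_open (delta : R) : is_open (Defs.d2 d) (controlled_pairs delta).
Proof.
  destruct d_metric as [_ [_ [_ d_tri]]].
  intros q [z [r [Hz [Hr [Hosc [H1 H2]]]]]].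
  exists (Rmin (r - d z (fst q)) (r - d z (snd q))); split; [apply Rmin_pos; lra |].
  intros y Hy; destruct (d2_lt_min Hy) as [Hy1 Hy2].
  exists z, r; repeat split; try assumption.
  - pose proof (d_tri z (fst q) (fst y)); lra.
  - pose proof (d_tri z (snd q) (snd y)); lra.
Qed.

Lemma controlled_pairs_diag (delta : R) (x : X) :
  0 < delta -> X0 x -> controlled_pairs delta (x, x).
Proof.
  destruct d_metric as [_ [d_zero _]].
  intros Hdelta Hx.
  destruct (pi_cont x Hx (delta / 2)) as [r [Hr Hosc]]; [lra |].
  assert (Hxx : d x x = 0) by now apply d_zero.
  exists x, r; simpl; repeat split; try assumption; lra.
Qed.

Lemma controlled_pairs_dist {delta : R} {q : X * X} :
  controlled_pairs delta q -> in_sq X0 q -> dY (pi (fst q)) (pi (snd q)) < delta.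
Proof.
  destruct dY_metric as [_ [_ [dY_sym dY_tri]]].
  intros [z [r [_ [_ [Hosc [H1 H2]]]]]] [Hq1 Hq2].
  pose proof (Hosc _ Hq1 H1); pose proof (Hosc _ Hq2 H2).
  pose proof (dY_tri (pi (fst q)) (pi z) (pi (snd q))).
  pose proof (dY_sym (pi z) (pi (fst q))); lra.
Qed.

Lemma closure_pi_dist {A : X * X -> Prop} {c : R} {p : X * X} :
  (forall q, A q -> in_sq X0 q /\ dY (pi (fst q)) (pi (snd q)) <= c) ->
  in_sq X0 p -> closure (Defs.d2 d) A p ->
  forall eps, 0 < eps -> dY (pi (fst p)) (pi (snd p)) < c + eps.
Proof.
  destruct dY_metric as [_ [_ [dY_sym dY_tri]]].
  intros HA [Hp1 Hp2] Hcl eps Heps.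
  destruct (pi_cont _ Hp1 (eps / 2)) as [r1 [Hr1 Hb1]]; [lra |].
  destruct (pi_cont _ Hp2 (eps / 2)) as [r2 [Hr2 Hb2]]; [lra |].
  destruct (Hcl (Rmin r1 r2)) as [q [Hq Hpq]]; [now apply Rmin_pos |].
  destruct (HA q Hq) as [[Hq1 Hq2] Hc].
  destruct (d2_lt_min Hpq) as [Hd1 Hd2].
  pose proof (Hb1 _ Hq1 Hd1); pose proof (Hb2 _ Hq2 Hd2).
  pose proof (dY_tri (pi (fst p)) (pi (fst q)) (pi (snd p))).
  pose proof (dY_tri (pi (fst q)) (pi (snd q)) (pi (snd p))).
  pose proof (dY_sym (pi (snd p)) (pi (snd q))); lra.
Qed.

Context {G : Type} {mul : G -> G -> G} {one : G} {inv : G -> G}.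
Context {act : G -> X -> X} {actY : G -> Y -> Y}.
Hypotheses (group : is_group mul one inv) (action : is_action mul one d act).
Hypotheses (actionY : is_action mul one dY actY) (equicont : equicontinuous dY actY).
Hypothesis X0_inv : invariant act X0.
Hypothesis pi_equiv : forall g x, X0 x -> pi (act g x) = actY g (pi x).

Lemma equicontinuous_factor_nbhd (eps : R) : 0 < eps ->
  exists U, is_open (Defs.d2 d) U /\ invariant (act2 act) U /\ (forall x, X0 x -> U (x, x)) /\
    forall q, U q -> in_sq X0 q -> dY (pi (fst q)) (pi (snd q)) < eps.
Proof.
  intros Heps.
  destruct (equicont eps Heps) as [delta [Hdelta Hequi]].
  pose proof (act2_action action) as action2.
  exists (saturation (act2 act) (controlled_pairs delta)); split; [| split; [| split]].
  - apply saturation_open; [apply action2 | apply controlled_pairs_open].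
  - exact (saturation_invariant _ _ group action2).
  - intros x Hx; exists one; unfold act2; simpl; rewrite (proj1 action).
    now apply controlled_pairs_diag.
  - intros q [g Hg] [Hq1 Hq2].
    destruct group as [_ [_ [_ [inv_mul _]]]].
    destruct actionY as [actY_one [actY_mul _]].
    assert (Hgq : dY (actY g (pi (fst q))) (actY g (pi (snd q))) < delta).
    { rewrite <- !pi_equiv by assumption.
      apply (controlled_pairs_dist Hg); split; simpl; now apply X0_inv. }
    specialize (Hequi (inv g) _ _ Hgq).
    now rewrite <- !actY_mul, inv_mul, !actY_one in Hequi.
Qed.

End Factor.

Lemma Q0_sub_Seq (G : Type) (mul : G -> G -> G) (one : G) (inv : G -> G)
  (X : Type) (d : X -> X -> R) (act : G -> X -> X) (X0 : X -> Prop) (p : X * X) :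
  is_group mul one inv -> is_metric d -> is_action mul one d act -> invariant act X0 ->
  Q0 d act X0 p -> Seq mul one d act X0 p.
Proof.
  intros group d_metric action X0_inv [Hp HQ]; split; [exact Hp |].
  intros Y dY actY dY_metric _ actionY equicont _ pi pi_cont pi_equiv.
  apply (metric_eq_of_lt dY_metric); intros eps Heps.
  destruct (equicontinuous_factor_nbhd d_metric dY_metric pi_cont group action actionY
              equicont X0_inv pi_equiv (eps / 2)) as [U [Uo [Ui [Ud Usmall]]]]; [lra |].
  assert (Hdist : dY (pi (fst p)) (pi (snd p)) < eps / 2 + eps / 2).
  { apply (closure_pi_dist dY_metric pi_cont (A := fun q => U q /\ in_sq X0 q)); try lra.
    - intros q [HqU Hq]; split; [exact Hq | apply Rlt_le, Usmall; assumption].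
    - exact Hp.
    - now apply HQ. }
  lra.
Qed.

Lemma Seq_closed_inv_equiv (G : Type) (mul : G -> G -> G) (one : G)
  (X : Type) (d : X -> X -> R) (act : G -> X -> X) (X0 : X -> Prop) :
  invariant act X0 -> closed_inv_equiv d act X0 (Seq mul one d act X0).
Proof.
  intros X0_inv; split; [| split; [| split; [| split; [| split]]]].
  - now intros q [Hq _].
  - intros q Hq Hcl; split; [exact Hq |].
    intros Y dY actY dY_metric Y_compact actionY equicont minimalY pi pi_cont pi_equiv.
    apply (metric_eq_of_lt dY_metric); intros eps Heps.
    rewrite <- (Rplus_0_l eps).
    apply (closure_pi_dist dY_metric pi_cont (A := Seq mul one d act X0)); try assumption.
    intros q' [Hq' Hfactor]; split; [exact Hq' |].
    rewrite (Hfactor Y dY actY) by assumption.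
    destruct dY_metric as [_ [dY_zero _]]; right; now apply dY_zero.
  - intros g q [[Hq1 Hq2] Hq]; split; [split; now apply X0_inv |].
    intros Y dY actY ? ? ? ? ? pi ? pi_equiv; simpl.
    rewrite !pi_equiv by assumption; f_equal; eapply Hq; eassumption.
  - intros x Hx; split; [now split | reflexivity].
  - intros x y [[Hx Hy] H]; split; [now split |].
    intros; symmetry; eapply H; eassumption.
  - intros x y z [[Hx Hy] Hxy] [[_ Hz] Hyz]; split; [now split |].
    intros; simpl; transitivity (pi y); [eapply Hxy | eapply Hyz]; eassumption.
Qed.

Theorem mainTheorem4
  (G : Type) (mul : G -> G -> G) (one : G) (inv : G -> G)
  (X : Type) (d : X -> X -> R) (act : G -> X -> X) (X0 : X -> Prop) :
  is_group mul one inv ->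
  is_metric d -> is_compact d ->
  is_action mul one d act ->
  top_transitive d act ->
  (forall x, X0 x -> Xt d act x) -> dense d X0 -> invariant act X0 ->
  (forall p, Q0 d act X0 p -> Seq mul one d act X0 p) /\
  (forall p, Sstar d act X0 p -> Seq mul one d act X0 p).
Proof.
  intros group d_metric _ action _ _ _ X0_inv.
  assert (HQ : forall p, Q0 d act X0 p -> Seq mul one d act X0 p)
    by (intros p; now apply Q0_sub_Seq with inv).
  split; [exact HQ |].
  intros p Hp; apply Hp; [now apply Seq_closed_inv_equiv | exact HQ].
Qed.
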